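(* Let $\mathcal C\in\{\mathbb{H},\mathbb{O}\}$, $F\in\{\mathbb{R},\mathbb{C}\}$ and $n\ge2$. Then $\triangle_{\mathcal C}\otimes1^{\otimes(n-2)}$ commutes and associates with all elements of $\mathrm{Sym}^n\mathcal C_F$. In particular, $\triangle^{(n)}_{\mathcal C}$ lies in the center of $\mathrm{Sym}^n\mathcal C_F$ (i.e. commutes and associates with all its elements), and hence $F[\triangle^{(n)}_{\mathcal C}]$ is a commutative and associative $F$-algebra.
   Context: $\mathbb{O}$ is the Cayley octonion algebra over $\mathbb{R}$ with basis $e_0=1,e_1,\dots,e_7$; $1,e_1,e_2,e_3$ span the quaternion subalgebra $\mathbb{H}$ ($e_i^2=-1$, $e_1e_2=-e_2e_1=e_3$, $e_2e_3=-e_3e_2=e_1$, $e_3e_1=-e_1e_3=e_2$), and $\mathbb{O}=\mathbb{H}\oplus\mathbb{H}e_4$ is the Cayley–Dickson double ($e_4^2=-1$, $e_{i+4}=e_ie_4$, $(x+ye_4)(z+we_4)=(xz-\bar wy)+(wx+y\bar z)e_4$). $\mathcal C_F=\mathcal C\otimes_\mathbb{R}F$; $\mathcal C_F^{\otimes n}$ is the tensor power over $F$ with componentwise multiplication; $\mathfrak S_n$ acts by $\sigma(x_1\otimes\cdots\otimes x_n)=x_{\sigma^{-1}(1)}\otimes\cdots\otimes x_{\sigma^{-1}(n)}$; $x^\vee=\frac1{n!}\sum_\sigma\sigma(x)$; $\mathrm{Sym}^n\mathcal C_F$ is the algebra of $\mathfrak S_n$-fixed tensors. With $d=\dim_\mathbb{R}\mathcal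 C$, $\triangle_{\mathcal C}=\frac1d\sum_{i=0}^{d-1}e_i\otimes e_i$ and $\triangle^{(n)}_{\mathcal C}=(\triangle_{\mathcal C}\otimes1^{\otimes(n-2)})^\vee$. An element $z$ commutes and associates with $x$ (for all $y$) if $zx=xz$ and $(zx)y=z(xy)$, $(xz)y=x(zy)$, $(xy)z=x(yz)$. *)

(* Tensor powers of the quaternion / octonion algebras over a
   field F, in coordinates w.r.t. the standard basis e_0 = 1, e_1, ..., e_{d-1}. *)
From mathcomp Require Import all_boot all_algebra all_fingroup.
From mathcomp Require Import reals complex.
Set Implicit Arguments.
Unset Strict Implicit.
Unset Printing Implicit Defensive.
Import GRing.Theory.
Local Open Scope ring_scope.

Inductive cd_alg := Quat | Oct.

(* d - 1, so that the index type 'I_d = 'I_(cd_dm c).+1 contains 0 *)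
Definition cd_dm (c : cd_alg) : nat := match c with Quat => 3 | Oct => 7 end.
Definition cd_dim (c : cd_alg) : nat := (cd_dm c).+1.

Section Algebras.
Variable F : fieldType.

(** Elements of C_F as coordinate functions nat -> F (coordinates >= d ignored). *)
Definition vec := nat -> F.

(* Hamilton product: e1e2 = e3, e2e3 = e1, e3e1 = e2, e_i^2 = -1 *)
Definition hmul (a b : vec) : vec := fun k =>
  match k with
  | 0 => a 0%N * b 0%N - a 1%N * b 1%N - a 2%N * b 2%N - a 3%N * b 3%N
  | 1 => a 0%N * b 1%N + a 1%N * b 0%N + a 2%N * b 3%N - a 3%N * b 2%N
  | 2 => a 0%N * b 2%N - a 1%N * b 3%N + a 2%N * b 0%N + a 3%N * b 1%N
  | 3 => a 0%N * b 3%N + a 1%N * b 2%N - a 2%N * b 1%N + a 3%N * b 0%N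
  | _ => 0
  end.

Definition hconj (a : vec) : vec := fun k => if k == 0%N then a 0%N else - a k.

Definition vadd (a b : vec) : vec := fun k => a k + b k.
Definition vsub (a b : vec) : vec := fun k => a k - b k.

(* O = H + H e4, a = x + y e4 with x = (a_0..a_3), y = (a_4..a_7), so that
   e_{i+4} = e_i e_4.  Cayley-Dickson product:
   (x + y e4)(z + w e4) = (x z - conj(w) y) + (w x + y conj(z)) e4. *)
Definition qpart (a : vec) : vec := fun k => if (k < 4)%N then a k else 0.
Definition epart (a : vec) : vec := fun k => if (k < 4)%N then a (k + 4)%N else 0.

Definition omul (a b : vec) : vec := fun k =>
  let x := qpart a in let y := epart a in
  let z := qpart b in let w := epart b in
  if (k < 4)%N then vsub (hmul x z) (hmul (hconj w) y) k
  else if (k < 8)%N then vadd (hmul w x) (hmul y (hconj z)) (k - 4)%N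
  else 0.

Definition cd_mul (c : cd_alg) : vec -> vec -> vec :=
  match c with Quat => hmul | Oct => omul end.

Definition basis_vec (i : nat) : vec := fun k => (k == i)%:R.

Definition sc (c : cd_alg) (i j k : 'I_(cd_dim c)) : F :=
  cd_mul c (basis_vec i) (basis_vec j) k.

(** C_F^{(x)n}: coordinates w.r.t. the basis e_{k_1} (x) ... (x) e_{k_n},
    indexed by k : 'I_n -> 'I_d. *)
Definition idx (c : cd_alg) (n : nat) := {ffun 'I_n -> 'I_(cd_dim c)}.
Definition tens (c : cd_alg) (n : nat) := {ffun idx c n -> F}.

Definition tscale c n (t : F) (x : tens c n) : tens c n := [ffun k => t * x k].

Definition btens c n (k : idx c n) : tens c n := [ffun k' : idx c n => (k' == k)%:R].

(** componentwise multiplication (bilinear extension of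
    (x1(x)..(x)xn)(y1(x)..(x)yn) = x1y1 (x) ... (x) xnyn) *)
Definition tmul c n (x y : tens c n) : tens c n :=
  [ffun k : idx c n => \sum_(i : idx c n) \sum_(j : idx c n)
               x i * y j * \prod_(m < n) sc (i m) (j m) (k m)].

Definition tone c n : tens c n := btens [ffun _ : 'I_n => ord0].

(** sigma (x1 (x) .. (x) xn) = x_{sigma^-1(1)} (x) .. (x) x_{sigma^-1(n)};
    on coordinates: (sigma x)_k = x_{k o sigma}. *)
Definition tperm_act c n (s : 'S_n) (x : tens c n) : tens c n :=
  [ffun k : idx c n => x [ffun m => k (s m)]].

Definition is_sym c n (x : tens c n) : Prop :=
  forall s : 'S_n, tperm_act s x = x.

Definition symmetrize c n (x : tens c n) : tens c n :=
  tscale (n`!%:R)^-1 (\sum_(s : 'S_n) tperm_act s x).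

(** triangle_C (x) 1^{(x)(n-2)} = (1/d) sum_i e_i (x) e_i (x) 1 (x) ... (x) 1 *)
Definition delta1 c n : tens c n :=
  tscale ((cd_dim c)%:R)^-1
    (\sum_(i < cd_dim c) btens [ffun m : 'I_n => if (m < 2)%N then i else ord0]).

Definition delta_n c n : tens c n := symmetrize (delta1 c n).

Definition comm_assoc_with c n (S : tens c n -> Prop) (z x : tens c n) : Prop :=
  tmul z x = tmul x z /\
  forall y, S y ->
    [/\ tmul (tmul z x) y = tmul z (tmul x y),
        tmul (tmul x z) y = tmul x (tmul z y) &
        tmul (tmul x y) z = tmul x (tmul y z)].

Inductive in_gen_alg c n (z : tens c n) : tens c n -> Prop :=
  | gen_one : in_gen_alg z (tone c n)
  | gen_z : in_gen_alg z z
  | gen_add a b : in_gen_alg z a -> in_gen_alg z b -> in_gen_alg z (a + b)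
  | gen_scale (t : F) a : in_gen_alg z a -> in_gen_alg z (tscale t a)
  | gen_mul a b : in_gen_alg z a -> in_gen_alg z b -> in_gen_alg z (tmul a b).

Definition lemma2p8_claims c n : Prop :=
  (forall x, is_sym x -> comm_assoc_with (@is_sym c n) (delta1 c n) x) /\
  (is_sym (delta_n c n) /\
   forall x, is_sym x -> comm_assoc_with (@is_sym c n) (delta_n c n) x) /\
  (forall a b e, in_gen_alg (delta_n c n) a -> in_gen_alg (delta_n c n) b ->
     in_gen_alg (delta_n c n) e ->
     tmul a b = tmul b a /\ tmul (tmul a b) e = tmul a (tmul b e)).

End Algebras.

(* Split C_F^⊗(2+n) = C_F^⊗2 ⊗ C_F^⊗n and let Φ be the partial trace over the
   first two factors, Φ (w ⊗ u) = tr w · u with tr (e_p ⊗ e_q) = [p = q].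
   For w ∈ C_F^⊗2 symmetric under the swap, the multiplication tables of H and O
   give Δ w = w Δ = tr w · Δ and tr (w w') = tr w · tr w' (finitely many
   identities between structure constants, checked by computation; removing
   the symmetrization needs 2 ≠ 0).  Hence, for x and y symmetric in the first
   two factors,
     (Δ ⊗ u) x = Δ ⊗ u (Φ x),   x (Δ ⊗ u) = Δ ⊗ (Φ x) u,   Φ (x y) = (Φ x) (Φ y),
   and every product of Δ ⊗ 1, x and y, in either bracketing, equals
   Δ ⊗ (Φ x) (Φ y).  The elements of Sym^n C_F commuting and associating with all
   of Sym^n C_F form a subalgebra stable under S_n, so it contains the
   symmetrization Δ^(n) of Δ ⊗ 1 and all of F[Δ^(n)]. *)

From HB Require Import structures.
From mathcomp Require Import all_boot all_algebra all_fingroup sesquilinear.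
From mathcomp Require Import reals complex ring.
Set Implicit Arguments.
Unset Strict Implicit.
Unset Printing Implicit Defensive.
Import GRing.Theory.
Local Open Scope ring_scope.

(* [hmul] and [omul] over an arbitrary ring, so that the structure constants can
   be computed in [int] and transported to any field. *)
Section CayleyDicksonTables.
Variable R : pzRingType.
Implicit Types a b : nat -> R.

Definition hmulR a b : nat -> R := fun k =>
  match k with
  | 0 => a 0%N * b 0%N - a 1%N * b 1%N - a 2%N * b 2%N - a 3%N * b 3%N
  | 1 => a 0%N * b 1%N + a 1%N * b 0%N + a 2%N * b 3%N - a 3%N * b 2%N
  | 2 => a 0%N * b 2%N - a 1%N * b 3%N + a 2%N * b 0%N + a 3%N * b 1%N
  | 3 => a 0%N * b 3%N + a 1%N * b 2%N - a 2%N * b 1%N + a 3%N * b 0%N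
  | _ => 0
  end.

Definition hconjR a : nat -> R := fun k => if k == 0%N then a 0%N else - a k.
Definition qpartR a : nat -> R := fun k => if (k < 4)%N then a k else 0.
Definition epartR a : nat -> R := fun k => if (k < 4)%N then a (k + 4)%N else 0.

Definition omulR a b : nat -> R := fun k =>
  let x := qpartR a in let y := epartR a in
  let z := qpartR b in let w := epartR b in
  if (k < 4)%N then hmulR x z k - hmulR (hconjR w) y k
  else if (k < 8)%N then hmulR w x (k - 4)%N + hmulR y (hconjR z) (k - 4)%N
  else 0.

Definition cd_mulR (c : cd_alg) : (nat -> R) -> (nat -> R) -> nat -> R :=
  match c with Quat => hmulR | Oct => omulR end.

Definition cd_sc (c : cd_alg) (i j k : nat) : R :=
  cd_mulR c (fun m => (m == i)%:R) (fun m => (m == j)%:R) k.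

End CayleyDicksonTables.

Section TablesRmorph.
Variables (R S : pzRingType) (f : {rmorphism R -> S}).
Implicit Types (a b : nat -> R).

Lemma hmulR_rmorph a b (a' b' : nat -> S) :
  a' =1 f \o a -> b' =1 f \o b -> hmulR a' b' =1 f \o hmulR a b.
Proof.
by move=> ha hb [|[|[|[|k]]]]; rewrite /= ?rmorph0 // !ha !hb /= !(rmorphD, rmorphN, rmorphM).
Qed.

Lemma hconjR_rmorph a (a' : nat -> S) : a' =1 f \o a -> hconjR a' =1 f \o hconjR a.
Proof. by move=> ha k; rewrite /hconjR /=; case: eqP => _; rewrite ?rmorphN ha. Qed.

Lemma qpartR_rmorph a (a' : nat -> S) : a' =1 f \o a -> qpartR a' =1 f \o qpartR a.
Proof. by move=> ha k; rewrite /qpartR /=; case: ifP; rewrite ?rmorph0. Qed.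

Lemma epartR_rmorph a (a' : nat -> S) : a' =1 f \o a -> epartR a' =1 f \o epartR a.
Proof. by move=> ha k; rewrite /epartR /=; case: ifP; rewrite ?rmorph0. Qed.

Lemma omulR_rmorph a b (a' b' : nat -> S) :
  a' =1 f \o a -> b' =1 f \o b -> omulR a' b' =1 f \o omulR a b.
Proof.
move=> ha hb k; rewrite /omulR /=.
have [qa ea] := (qpartR_rmorph ha, epartR_rmorph ha).
have [qb eb] := (qpartR_rmorph hb, epartR_rmorph hb).
case: ifP => _; first by rewrite rmorphB (hmulR_rmorph qa qb) (hmulR_rmorph (hconjR_rmorph eb) ea).
case: ifP => _; last by rewrite rmorph0.
by rewrite rmorphD (hmulR_rmorph eb qa) (hmulR_rmorph ea (hconjR_rmorph qb)).
Qed.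

Lemma cd_sc_rmorph c i j k : f (cd_sc R c i j k) = cd_sc S c i j k.
Proof.
have e m : (m == i)%:R = f (m == i)%:R by rewrite rmorph_nat.
have e' m : (m == j)%:R = f (m == j)%:R by rewrite rmorph_nat.
case: c; [exact/esym/(hmulR_rmorph e e') | exact/esym/(omulR_rmorph e e')].
Qed.

End TablesRmorph.

Definition sc_table (c : cd_alg) : seq (seq (seq int)) :=
  let r := iota 0 (cd_dim c) in
  [seq [seq [seq cd_sc int c i j k | k <- r] | j <- r] | i <- r].

(* Precomputed, so that the identities below are checked by table lookup. *)
Definition quat_table := Eval vm_compute in sc_table Quat.
Definition oct_table := Eval vm_compute in sc_table Oct.

Definition sc_lookup (c : cd_alg) (i j k : nat) : int :=
  let t := match c with Quat => quat_table | Oct => oct_table end in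
  nth 0 (nth [::] (nth [::] t i) j) k.

Lemma sc_table_eval c : sc_table c = match c with Quat => quat_table | Oct => oct_table end.
Proof. by case: c; vm_compute. Qed.

Lemma cd_sc_lookup c (i j k : 'I_(cd_dim c)) : cd_sc int c i j k = sc_lookup c i j k.
Proof.
rewrite /sc_lookup -sc_table_eval /sc_table.
by rewrite !(nth_map 0%N) ?size_map ?size_iota // !nth_iota.
Qed.

Lemma sc_lookupE (F : fieldType) c (i j k : 'I_(cd_dim c)) :
  sc F i j k = (sc_lookup c i j k)%:~R.
Proof. by rewrite -cd_sc_lookup cd_sc_rmorph; case: c i j k. Qed.

Definition all_below (d : nat) (P : pred nat) := all P (iota 0 d).

Lemma all_below2P d (P : nat -> nat -> bool) :
  all_below d (fun i => all_below d (P i)) -> forall i j : 'I_d, P i j.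
Proof.
have below (k : 'I_d) : (k : nat) \in iota 0 d by rewrite mem_iota add0n ltn_ord.
rewrite /all_below.
by move=> /allP h i j; move/allP: (h i (below i)); apply.
Qed.

Section TableChecks.
Variable c : cd_alg.
Local Notation d := (cd_dim c).
Local Notation scZ := (sc_lookup c).

Definition unit_check := all_below d (fun j => all_below d (fun k =>
  (scZ 0 j k == (j == k)%:R) && (scZ j 0 k == (j == k)%:R))).

Definition lmul_check := all_below d (fun p => all_below d (fun q =>
  all_below d (fun k0 => all_below d (fun k1 =>
  \sum_(0 <= a < d) (scZ a p k0 * scZ a q k1 + scZ a q k0 * scZ a p k1)
    == ((p == q) && (k0 == k1))%:R *+ 2)))).

Definition rmul_check := all_below d (fun p => all_below d (fun q =>
  all_below d (fun k0 => all_below d (fun k1 =>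
  \sum_(0 <= a < d) (scZ p a k0 * scZ q a k1 + scZ q a k0 * scZ p a k1)
    == ((p == q) && (k0 == k1))%:R *+ 2)))).

Definition trace_check := all_below d (fun p0 => all_below d (fun p1 =>
  all_below d (fun q0 => all_below d (fun q1 =>
  \sum_(0 <= b < d) (scZ p0 q0 b * scZ p1 q1 b + scZ p0 q1 b * scZ p1 q0 b
                   + (scZ p1 q0 b * scZ p0 q1 b + scZ p1 q1 b * scZ p0 q0 b))
    == ((p0 == p1) && (q0 == q1))%:R *+ 4)))).

End TableChecks.

Lemma unit_check_ok c : unit_check c. Proof. by case: c; vm_compute. Qed.
Lemma lmul_check_ok c : lmul_check c.
Proof. by rewrite /lmul_check unlock; case: c; vm_compute. Qed.
Lemma rmul_check_ok c : rmul_check c.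
Proof. by rewrite /rmul_check unlock; case: c; vm_compute. Qed.
Lemma trace_check_ok c : trace_check c.
Proof. by rewrite /trace_check unlock; case: c; vm_compute. Qed.

Section StructureConstants.
Variables (F : fieldType) (c : cd_alg).
Local Notation I := 'I_(cd_dim c).
Local Notation sc := (sc F (c := c)).

Lemma sc_unitl (j k : I) : sc ord0 j k = (j == k)%:R.
Proof.
have /andP[/eqP e _] := all_below2P (unit_check_ok c) j k.
by rewrite sc_lookupE e rmorph_nat.
Qed.

Lemma sc_unitr (j k : I) : sc j ord0 k = (j == k)%:R.
Proof.
have /andP[_ /eqP e] := all_below2P (unit_check_ok c) j k.
by rewrite sc_lookupE e rmorph_nat.
Qed.

Lemma sum_sc_lmul (p q k0 k1 : I) :
  \sum_a (sc a p k0 * sc a q k1 + sc a q k0 * sc a p k1)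
  = ((p == q) && (k0 == k1))%:R *+ 2.
Proof.
have /eqP/(congr1 (intmul (1 : F))) :=
  all_below2P (all_below2P (lmul_check_ok c) p q) k0 k1.
rewrite rmorphMn rmorph_nat rmorph_sum big_mkord => <-.
by apply: eq_bigr => a _; rewrite !sc_lookupE -!rmorphM -rmorphD.
Qed.

Lemma sum_sc_rmul (p q k0 k1 : I) :
  \sum_a (sc p a k0 * sc q a k1 + sc q a k0 * sc p a k1)
  = ((p == q) && (k0 == k1))%:R *+ 2.
Proof.
have /eqP/(congr1 (intmul (1 : F))) :=
  all_below2P (all_below2P (rmul_check_ok c) p q) k0 k1.
rewrite rmorphMn rmorph_nat rmorph_sum big_mkord => <-.
by apply: eq_bigr => a _; rewrite !sc_lookupE -!rmorphM -rmorphD.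
Qed.

Lemma sum_sc_trace (p0 p1 q0 q1 : I) :
  \sum_b (sc p0 q0 b * sc p1 q1 b + sc p0 q1 b * sc p1 q0 b
        + (sc p1 q0 b * sc p0 q1 b + sc p1 q1 b * sc p0 q0 b))
  = ((p0 == p1) && (q0 == q1))%:R *+ 4.
Proof.
have /eqP/(congr1 (intmul (1 : F))) :=
  all_below2P (all_below2P (trace_check_ok c) p0 p1) q0 q1.
rewrite rmorphMn rmorph_nat rmorph_sum big_mkord => <-.
by apply: eq_bigr => b _; rewrite !sc_lookupE -!rmorphM -!rmorphD.
Qed.

End StructureConstants.

(* The vector space structure of [{ffun _ -> F^o}], so that [tmul] can be declared
   bilinear. *)
HB.instance Definition _ (F : fieldType) (c : cd_alg) (n : nat) :=
  GRing.Lmodule.copy (tens F c n) {ffun idx c n -> F^o}.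

Section Tensors.
Variables (F : fieldType) (c : cd_alg).
Local Notation I := 'I_(cd_dim c).
Local Notation tens := (tens F c).
Local Notation idx := (idx c).
Local Notation sc := (sc F (c := c)).
Local Notation btens := (@btens F c _).
Local Notation delta2 := (delta1 F c 2).

Lemma tscaleE n t (x : tens n) : tscale t x = t *: x.
Proof. by []. Qed.

Lemma tens_addE n (x y : tens n) k : (x + y) k = x k + y k.
Proof. by rewrite ffunE. Qed.

Lemma tens_scaleE n t (x : tens n) k : (t *: x) k = t * x k.
Proof. by rewrite ffunE. Qed.

Lemma tmul_is_bilinear n : bilinear_for *:%R *:%R (@tmul F c n).
Proof.
split=> [z | x] t u v; apply/ffunP => k;
  rewrite !(tens_addE, tens_scaleE) !ffunE mulr_sumr -big_split; apply: eq_bigr => i _;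
  rewrite mulr_sumr -big_split; apply: eq_bigr => j _ /=; rewrite !(tens_addE, tens_scaleE); ring.
Qed.

HB.instance Definition _ n :=
  bilinear_isBilinear.Build F (tens n) (tens n) (tens n) *:%R *:%R (@tmul F c n)
    (@tmul_is_bilinear n).

Lemma tens_expand n (x : tens n) : x = \sum_i x i *: btens i.
Proof.
apply/ffunP => k; rewrite sum_ffunE (bigD1 k) //= big1 => [|i /negbTE ne].
  by rewrite tens_scaleE ffunE eqxx mulr1 addr0.
by rewrite tens_scaleE ffunE eq_sym ne mulr0.
Qed.

Lemma prod_eq_idx n (i j : idx n) : \prod_m ((i m == j m)%:R : F) = (i == j)%:R.
Proof.
case: (boolP (i == j)) => [/eqP->|ne]; first by rewrite big1 // => m _; rewrite eqxx.
have [m /negbTE im_jm|same] := pickP (fun m => i m != j m).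
  by rewrite (bigD1 m) //= im_jm mul0r.
by case/eqP: ne; apply/ffunP => m; apply/eqP/negbFE/same.
Qed.

Lemma sum_eq_mul (T : finType) (a : T) (G : T -> F) :
  \sum_t (t == a)%:R * G t = G a.
Proof.
rewrite (bigD1 a) //= big1 => [|t /negbTE ne]; first by rewrite eqxx mul1r addr0.
by rewrite ne mul0r.
Qed.

Lemma tmul_btens n (i j : idx n) :
  tmul (btens i) (btens j) = [ffun k : idx n => \prod_m sc (i m) (j m) (k m)].
Proof.
apply/ffunP => k; rewrite !ffunE; transitivity (\sum_(i' : idx n) (i' == i)%:R *
  \sum_(j' : idx n) (j' == j)%:R * \prod_m sc (i' m) (j' m) (k m)).
  by apply: eq_bigr => i' _; rewrite mulr_sumr; apply: eq_bigr => j' _; rewrite !ffunE mulrA.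
by rewrite !sum_eq_mul.
Qed.

Lemma tone_mull n (x : tens n) : tmul (tone F c n) x = x.
Proof.
rewrite [in LHS](tens_expand x) linear_sumr [RHS]tens_expand.
apply: eq_bigr => j _; rewrite linearZr /= /tone tmul_btens; congr (_ *: _).
apply/ffunP => k; rewrite !ffunE.
by under eq_bigr do rewrite ffunE sc_unitl; rewrite prod_eq_idx eq_sym.
Qed.

Lemma tone_mulr n (x : tens n) : tmul x (tone F c n) = x.
Proof.
rewrite [in LHS](tens_expand x) linear_sumlz [RHS]tens_expand.
apply: eq_bigr => i _; rewrite linearZl /= /tone tmul_btens; congr (_ *: _).
apply/ffunP => k; rewrite !ffunE.
by under eq_bigr do rewrite ffunE sc_unitr; rewrite prod_eq_idx eq_sym.
Qed.

Lemma tperm_act_is_linear n (s : 'S_n) : linear (@tperm_act F c n s).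
Proof. by move=> t x y; apply/ffunP => k; rewrite !(ffunE, tens_addE, tens_scaleE). Qed.

HB.instance Definition _ n (s : 'S_n) :=
  GRing.isLinear.Build F (tens n) (tens n) *:%R (tperm_act s) (tperm_act_is_linear s).

Lemma tperm_act_tmul n (s : 'S_n) (x y : tens n) :
  tperm_act s (tmul x y) = tmul (tperm_act s x) (tperm_act s y).
Proof.
have idx_perm_inj : injective (fun i : idx n => [ffun m => i (s m)]).
  move=> i i' /ffunP e; apply/ffunP => m.
  by have := e ((s^-1)%g m); rewrite !ffunE permKV.
apply/ffunP => k; rewrite !ffunE (reindex_inj idx_perm_inj); apply: eq_bigr => i _.
rewrite (reindex_inj idx_perm_inj); apply: eq_bigr => j _; rewrite !ffunE.
congr (_ * _); rewrite [RHS](reindex_inj (@perm_inj _ s)).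
by apply: eq_bigr => m _; rewrite !ffunE.
Qed.

Lemma tperm_actM n (s t : 'S_n) (x : tens n) :
  tperm_act s (tperm_act t x) = tperm_act (t * s)%g x.
Proof.
by apply/ffunP => k; rewrite !ffunE; congr (x _); apply/ffunP => m; rewrite !ffunE permM.
Qed.

Section Split.
Variables m n : nat.

Definition idx_cat (i : idx m) (j : idx n) : idx (m + n) :=
  [ffun p => match split p with inl a => i a | inr b => j b end].
Definition idx_lsplit (k : idx (m + n)) : idx m := [ffun a => k (lshift n a)].
Definition idx_rsplit (k : idx (m + n)) : idx n := [ffun b => k (rshift m b)].

Lemma idx_catKl i j : idx_lsplit (idx_cat i j) = i.
Proof. by apply/ffunP => a; rewrite !ffunE (unsplitK (inl _ a)). Qed.

Lemma idx_catKr i j : idx_rsplit (idx_cat i j) = j.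
Proof. by apply/ffunP => b; rewrite !ffunE (unsplitK (inr _ b)). Qed.

Lemma idx_splitK k : idx_cat (idx_lsplit k) (idx_rsplit k) = k.
Proof.
by apply/ffunP => p; rewrite ffunE -[in RHS](splitK p); case: split => a; rewrite ffunE.
Qed.

Lemma idx_cat_eq i j i' j' : (idx_cat i j == idx_cat i' j') = (i == i') && (j == j').
Proof.
apply/eqP/andP => [e | [/eqP-> /eqP->] //]; split; apply/eqP.
  by move: (congr1 idx_lsplit e); rewrite !idx_catKl.
by move: (congr1 idx_rsplit e); rewrite !idx_catKr.
Qed.

Lemma sum_idx_cat (G : idx (m + n) -> F) :
  \sum_k G k = \sum_i \sum_j G (idx_cat i j).
Proof.
rewrite pair_bigA (reindex (fun ij => idx_cat ij.1 ij.2)) //.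
exists (fun k => (idx_lsplit k, idx_rsplit k)) => [[i j] _ | k _] /=.
  by rewrite idx_catKl idx_catKr.
exact: idx_splitK.
Qed.

Definition tens_cat (x : tens m) (y : tens n) : tens (m + n) :=
  [ffun k => x (idx_lsplit k) * y (idx_rsplit k)].

Lemma tens_catE x y i j : tens_cat x y (idx_cat i j) = x i * y j.
Proof. by rewrite ffunE idx_catKl idx_catKr. Qed.

Lemma tens_cat_is_bilinear : bilinear_for *:%R *:%R tens_cat.
Proof.
by split=> [y | x] t u v; apply/ffunP => k; rewrite !(tens_addE, tens_scaleE, ffunE); ring.
Qed.

HB.instance Definition _ :=
  bilinear_isBilinear.Build F (tens m) (tens n) (tens (m + n)) *:%R *:%R tens_cat
    tens_cat_is_bilinear.

Lemma tens_cat_btens i j : tens_cat (btens i) (btens j) = btens (idx_cat i j).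
Proof.
by apply/ffunP => k; rewrite !ffunE -[k in RHS]idx_splitK idx_cat_eq -natrM mulnb.
Qed.

Lemma prod_idx_cat (i i' : idx m) (j j' : idx n) (k : idx (m + n)) :
  \prod_p sc (idx_cat i j p) (idx_cat i' j' p) (k p) =
  \prod_a sc (i a) (i' a) (idx_lsplit k a) * \prod_b sc (j b) (j' b) (idx_rsplit k b).
Proof.
rewrite big_split_ord; congr (_ * _); apply: eq_bigr => p _.
  by rewrite !ffunE (unsplitK (inl _ p)).
by rewrite !ffunE (unsplitK (inr _ p)).
Qed.

Lemma tmul_tens_cat (x x' : tens m) (y y' : tens n) :
  tmul (tens_cat x y) (tens_cat x' y') = tens_cat (tmul x x') (tmul y y').
Proof.
apply/ffunP => k; rewrite !ffunE sum_idx_cat mulr_suml; apply: eq_bigr => i _.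
under eq_bigr do rewrite sum_idx_cat.
rewrite exchange_big mulr_suml; apply: eq_bigr => i' _.
rewrite mulr_sumr; apply: eq_bigr => j _; rewrite mulr_sumr; apply: eq_bigr => j' _.
by rewrite !tens_catE prod_idx_cat; ring.
Qed.

End Split.

Section TwoFactors.

Definition pair2 (p q : I) : idx 2 := [ffun m => if m == ord0 then p else q].

Lemma pair2_0 p q : pair2 p q ord0 = p. Proof. by rewrite ffunE. Qed.
Lemma pair2_1 p q : pair2 p q ord_max = q. Proof. by rewrite ffunE. Qed.

Lemma pair2K (k : idx 2) : pair2 (k ord0) (k ord_max) = k.
Proof.
apply/ffunP => m; rewrite ffunE.
by case: ifP => [/eqP-> // | m_neq0]; congr (k _); apply/val_inj; case: m m_neq0 => [[|[|]]].
Qed.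

Lemma pair2_eq p q p' q' : (pair2 p q == pair2 p' q') = (p == p') && (q == q').
Proof.
apply/eqP/andP => [e | [/eqP-> /eqP->] //]; split; apply/eqP.
  by move: (congr1 (fun k : idx 2 => k ord0) e); rewrite !pair2_0.
by move: (congr1 (fun k : idx 2 => k ord_max) e); rewrite !pair2_1.
Qed.

Lemma sum_idx2 (G : idx 2 -> F) : \sum_k G k = \sum_p \sum_q G (pair2 p q).
Proof.
rewrite pair_bigA (reindex (fun pq => pair2 pq.1 pq.2)) //.
exists (fun k : idx 2 => (k ord0, k ord_max)) => [[p q] _ | k _]; last exact: pair2K.
by rewrite /= pair2_0 pair2_1.
Qed.

Lemma prod_ord2 (f : 'I_2 -> F) : \prod_m f m = f ord0 * f ord_max.
Proof. by rewrite big_ord_recr big_ord1; congr (f _ * _); apply: val_inj. Qed.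

Lemma tens2P (x y : tens 2) : (forall p q, x (pair2 p q) = y (pair2 p q)) -> x = y.
Proof. by move=> e; apply/ffunP => k; rewrite -[k]pair2K e. Qed.

Lemma tmul2E (x y : tens 2) k0 k1 :
  tmul x y (pair2 k0 k1) = \sum_p \sum_q x (pair2 p q) *
    \sum_p' \sum_q' y (pair2 p' q') * (sc p p' k0 * sc q q' k1).
Proof.
rewrite ffunE sum_idx2; apply: eq_bigr => p _; apply: eq_bigr => q _.
rewrite sum_idx2 mulr_sumr; apply: eq_bigr => p' _; rewrite mulr_sumr.
by apply: eq_bigr => q' _; rewrite prod_ord2 !pair2_0 !pair2_1 -mulrA.
Qed.

Lemma delta2E p q : delta2 (pair2 p q) = (cd_dim c)%:R^-1 * (p == q)%:R.
Proof.
rewrite ffunE sum_ffunE; congr (_ * _).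
have diag a : [ffun m : 'I_2 => if (m < 2)%N then a else ord0] = pair2 a a.
  by apply/ffunP => m; rewrite !ffunE ltn_ord; case: ifP.
under eq_bigr do rewrite ffunE diag pair2_eq -mulnb natrM eq_sym.
by rewrite sum_eq_mul eq_sym.
Qed.

Lemma sum_delta2 (G : I -> I -> F) :
  \sum_p \sum_q delta2 (pair2 p q) * G p q = (cd_dim c)%:R^-1 * \sum_a G a a.
Proof.
rewrite mulr_sumr; apply: eq_bigr => p _.
under eq_bigr do rewrite delta2E eq_sym -mulrA.
by rewrite -mulr_sumr sum_eq_mul.
Qed.

Definition sym2 (w : tens 2) := forall p q, w (pair2 p q) = w (pair2 q p).

Definition trace2 (w : tens 2) : F := \sum_a w (pair2 a a).

Lemma sum_sym_mul2 (T : finType) (a g : T -> T -> F) :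
  (forall p q, a p q = a q p) ->
  (\sum_p \sum_q a p q * g p q) *+ 2 = \sum_p \sum_q a p q * (g p q + g q p).
Proof.
move=> a_sym; under [RHS]eq_bigr do under eq_bigr do rewrite mulrDr.
under [RHS]eq_bigr do rewrite big_split; rewrite big_split /= mulr2n; congr (_ + _).
by rewrite exchange_big; apply: eq_bigr => p _; apply: eq_bigr => q _; rewrite a_sym.
Qed.

Lemma sum_diag (G : I -> I -> F) : \sum_p \sum_q G p q * (p == q)%:R = \sum_a G a a.
Proof.
by apply: eq_bigr => p _; under eq_bigr do rewrite mulrC eq_sym; rewrite sum_eq_mul.
Qed.

Lemma sum_diag_and (G : I -> I -> F) (b : bool) :
  \sum_p \sum_q G p q * ((p == q) && b)%:R = (\sum_a G a a) * b%:R.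
Proof.
rewrite mulr_suml; apply: eq_bigr => p _.
under eq_bigr do rewrite -mulnb natrM mulrCA eq_sym.
by rewrite sum_eq_mul.
Qed.

Hypothesis two_neq0 : 2%:R != 0 :> F.

Lemma mulr2n_inj : injective (fun x : F => x *+ 2).
Proof. by move=> x y /=; rewrite -[x *+ 2]mulr_natr -[y *+ 2]mulr_natr; apply: mulIf. Qed.

Lemma tmul_delta2_sym (w : tens 2) : sym2 w -> tmul delta2 w = trace2 w *: delta2.
Proof.
(* Adding the swapped sum doubles both sides. *)
move=> w_sym; apply: tens2P => k0 k1; apply: mulr2n_inj => /=.
rewrite tmul2E sum_delta2 tens_scaleE delta2E.
transitivity ((cd_dim c)%:R^-1 *
  (\sum_p \sum_q w (pair2 p q) * \sum_a (sc a p k0 * sc a q k1)) *+ 2).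
  congr (_ * _ *+ 2); rewrite exchange_big; apply: eq_bigr => p _.
  by rewrite exchange_big; apply: eq_bigr => q _; rewrite mulr_sumr.
rewrite -mulrnAr sum_sym_mul2 //.
under eq_bigr do under eq_bigr do rewrite -big_split sum_sc_lmul mulrnAr.
by under eq_bigr do rewrite sumrMnl; rewrite sumrMnl sum_diag_and /trace2; ring.
Qed.

Lemma tmul_sym_delta2 (w : tens 2) : sym2 w -> tmul w delta2 = trace2 w *: delta2.
Proof.
move=> w_sym; apply: tens2P => k0 k1; apply: mulr2n_inj => /=.
rewrite tmul2E tens_scaleE delta2E.
under eq_bigr do under eq_bigr do rewrite sum_delta2 mulrCA.
under eq_bigr do rewrite -mulr_sumr; rewrite -mulr_sumr -mulrnAr sum_sym_mul2 //.
under eq_bigr do under eq_bigr do rewrite -big_split sum_sc_rmul mulrnAr.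
by under eq_bigr do rewrite sumrMnl; rewrite sumrMnl sum_diag_and /trace2; ring.
Qed.

Lemma trace2_tmul (w w' : tens 2) :
  sym2 w -> sym2 w' -> trace2 (tmul w w') = trace2 w * trace2 w'.
Proof.
move=> w_sym w'_sym.
pose T p q p' q' := \sum_b sc p p' b * sc q q' b.
have expand : trace2 (tmul w w') =
    \sum_p \sum_q w (pair2 p q) * \sum_p' \sum_q' w' (pair2 p' q') * T p q p' q'.
  rewrite /trace2; under eq_bigr do rewrite tmul2E; rewrite exchange_big; apply: eq_bigr => p _.
  rewrite exchange_big; apply: eq_bigr => q _; rewrite -mulr_sumr; congr (_ * _).
  rewrite exchange_big; apply: eq_bigr => p' _; rewrite exchange_big.
  by apply: eq_bigr => q' _; rewrite mulr_sumr.
have inner p q :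
    (\sum_p' \sum_q' w' (pair2 p' q') * (T p q p' q' + T q p p' q')) *+ 2 =
    (trace2 w' * (p == q)%:R) *+ 4.
  rewrite sum_sym_mul2 //.
  under eq_bigr do under eq_bigr do
    rewrite addrACA -!big_split sum_sc_trace andbC mulrnAr.
  by under eq_bigr do rewrite sumrMnl; rewrite sumrMnl sum_diag_and.
have merge p q :
    \sum_p' \sum_q' w' (pair2 p' q') * T p q p' q' +
    \sum_p' \sum_q' w' (pair2 p' q') * T q p p' q' =
    \sum_p' \sum_q' w' (pair2 p' q') * (T p q p' q' + T q p p' q').
  rewrite -big_split; apply: eq_bigr => p' _.
  by rewrite -big_split; apply: eq_bigr => q' _; rewrite mulrDr.
apply: mulr2n_inj; apply: mulr2n_inj => /=; rewrite expand sum_sym_mul2 //.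
under eq_bigr do under eq_bigr do rewrite merge.
rewrite -sumrMnl; under eq_bigr do rewrite -sumrMnl.
under eq_bigr do under eq_bigr do rewrite -mulrnAr inner mulrnAr mulrA.
by under eq_bigr do rewrite sumrMnl; rewrite sumrMnl sum_diag -mulr_suml -mulrnA.
Qed.

End TwoFactors.

Section FirstTwoFactors.
Variable n : nat.
Hypothesis two_neq0 : 2%:R != 0 :> F.

Definition slice (x : tens (2 + n)) (k : idx n) : tens 2 := [ffun i => x (idx_cat i k)].

Definition ptrace (x : tens (2 + n)) : tens n := [ffun k => trace2 (slice x k)].

Lemma ptrace_is_linear : linear ptrace.
Proof.
move=> t x y; apply/ffunP => k; rewrite !(tens_addE, tens_scaleE, ffunE) /trace2.
by rewrite mulr_sumr -big_split; apply: eq_bigr => a _; rewrite !(tens_addE, tens_scaleE, ffunE).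
Qed.

HB.instance Definition _ :=
  GRing.isLinear.Build F (tens (2 + n)) (tens n) *:%R ptrace ptrace_is_linear.

Lemma slice_expand (x : tens (2 + n)) : x = \sum_k tens_cat (slice x k) (btens k).
Proof.
apply/ffunP => l; rewrite sum_ffunE -[in LHS](idx_splitK l).
under eq_bigr do rewrite !ffunE mulrC eq_sym.
by rewrite sum_eq_mul.
Qed.

Lemma ptrace_tens_cat (w : tens 2) (u : tens n) : ptrace (tens_cat w u) = trace2 w *: u.
Proof.
apply/ffunP => k; rewrite tens_scaleE ffunE /trace2 mulr_suml.
by apply: eq_bigr => a _; rewrite ffunE tens_catE mulrC.
Qed.

Lemma ptrace_expand (x : tens (2 + n)) : ptrace x = \sum_k trace2 (slice x k) *: btens k.
Proof. by rewrite {1}(slice_expand x) linear_sum /=; under eq_bigr do rewrite ptrace_tens_cat. Qed.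

Definition sym_slices (x : tens (2 + n)) := forall k, sym2 (slice x k).

Lemma tmul_delta_cat_sym (u : tens n) (x : tens (2 + n)) : sym_slices x ->
  tmul (tens_cat delta2 u) x = tens_cat delta2 (tmul u (ptrace x)).
Proof.
move=> x_sym; rewrite {1}(slice_expand x) ptrace_expand !linear_sumr /=.
apply: eq_bigr => k _; rewrite tmul_tens_cat tmul_delta2_sym //.
by rewrite [tens_cat (_ *: _) _]linearZl [tmul _ (_ *: _)]linearZr /= linearZr.
Qed.

Lemma tmul_sym_delta_cat (u : tens n) (x : tens (2 + n)) : sym_slices x ->
  tmul x (tens_cat delta2 u) = tens_cat delta2 (tmul (ptrace x) u).
Proof.
move=> x_sym; rewrite {1}(slice_expand x) ptrace_expand !linear_sumlz linear_sumr /=.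
apply: eq_bigr => k _; rewrite tmul_tens_cat tmul_sym_delta2 //.
by rewrite [tens_cat (_ *: _) _]linearZl [tmul (_ *: _) _]linearZl /= linearZr.
Qed.

Lemma ptrace_tmul (x y : tens (2 + n)) : sym_slices x -> sym_slices y ->
  ptrace (tmul x y) = tmul (ptrace x) (ptrace y).
Proof.
move=> x_sym y_sym; rewrite [ptrace x]ptrace_expand [ptrace y]ptrace_expand.
rewrite {1}(slice_expand x) {1}(slice_expand y) !linear_sumlz /= linear_sum.
apply: eq_bigr => k _; rewrite !linear_sumr /= linear_sum; apply: eq_bigr => l _.
rewrite /= tmul_tens_cat ptrace_tens_cat trace2_tmul //.
by rewrite [tmul (_ *: _) _]linearZl /= linearZr scalerA.
Qed.

Lemma delta1_cat : delta1 F c (2 + n) = tens_cat delta2 (tone F c n).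
Proof.
rewrite /delta1 !tscaleE linearZl /= linear_sumlz /=; congr (_ *: _); apply: eq_bigr => a _.
rewrite /tone tens_cat_btens; congr btens; apply/ffunP => p; rewrite !ffunE.
by case: splitP => b _; rewrite ?ffunE ?ltn_ord.
Qed.

Lemma is_sym_sym_slices (x : tens (2 + n)) : is_sym x -> sym_slices x.
Proof.
move=> x_sym k p q; rewrite !ffunE.
pose s : 'S_(2 + n) := tperm (lshift n ord0) (lshift n ord_max).
rewrite -[in LHS](x_sym s) ffunE; congr (x _); apply/ffunP => r; rewrite !ffunE.
rewrite -[r](splitK r); case: (split r) => b; rewrite unsplitK /=; last first.
  by rewrite tpermD ?eq_lrshift // (unsplitK (inr _ b)).
have [->|->] : b = ord0 \/ b = ord_max.
  by case: b => [[|[|//]] ?]; [left | right]; apply: val_inj.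
  by rewrite tpermL (unsplitK (inl _ ord_max)) pair2_0 pair2_1.
by rewrite tpermR (unsplitK (inl _ ord0)) pair2_0 pair2_1.
Qed.

End FirstTwoFactors.

End Tensors.

Section MagmaCenter.
Variables (T : Type) (mul : T -> T -> T) (S : T -> Prop).

Definition central (z : T) := forall x, S x ->
  mul z x = mul x z /\
  forall y, S y ->
    [/\ mul (mul z x) y = mul z (mul x y),
        mul (mul x z) y = mul x (mul z y) &
        mul (mul x y) z = mul x (mul y z)].

Section CentralElement.
Variable z : T.
Hypothesis zc : central z.

Lemma central_comm x : S x -> mul z x = mul x z.
Proof. by case/zc. Qed.

Lemma central_assocl x y : S x -> S y -> mul (mul z x) y = mul z (mul x y).
Proof. by move=> Sx Sy; case: (zc Sx) => _ /(_ y Sy) []. Qed.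

Lemma central_assocm x y : S x -> S y -> mul (mul x z) y = mul x (mul z y).
Proof. by move=> Sx Sy; case: (zc Sx) => _ /(_ y Sy) []. Qed.

Lemma central_assocr x y : S x -> S y -> mul (mul x y) z = mul x (mul y z).
Proof. by move=> Sx Sy; case: (zc Sx) => _ /(_ y Sy) []. Qed.

End CentralElement.

Hypothesis mulS : forall x y, S x -> S y -> S (mul x y).

Lemma central_mul z w : S z -> S w -> central z -> central w -> central (mul z w).
Proof.
move=> Sz Sw zc wc x Sx; split=> [|y Sy].
  rewrite (central_assocl zc Sw Sx) (central_comm wc Sx) -(central_assocl zc Sx Sw).
  by rewrite (central_comm zc Sx) (central_assocm zc Sx Sw).
split.
- rewrite (central_assocl zc Sw Sx) (central_assocl zc (mulS Sw Sx) Sy).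
  by rewrite (central_assocl wc Sx Sy) -(central_assocl zc Sw (mulS Sx Sy)).
- rewrite -(central_assocm zc Sx Sw) (central_assocm wc (mulS Sx Sz) Sy).
  by rewrite (central_assocm zc Sx (mulS Sw Sy)) -(central_assocl zc Sw Sy).
- rewrite -(central_assocr wc (mulS Sx Sy) Sz) (central_assocr zc Sx Sy).
  by rewrite (central_assocr wc Sx (mulS Sy Sz)) (central_assocr wc Sy Sz).
Qed.

End MagmaCenter.

Section SymmetricCenter.
Variables (F : fieldType) (c : cd_alg) (n : nat).
Local Notation tens := (tens F c n).
Local Notation sym := (@is_sym F c n).
Local Notation central := (central (@tmul F c n) sym).

Lemma sym_tmul x y : sym x -> sym y -> sym (tmul x y).
Proof. by move=> xs ys s; rewrite tperm_act_tmul xs ys. Qed.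

Lemma sym_add x y : sym x -> sym y -> sym (x + y).
Proof. by move=> xs ys s; rewrite linearD /= xs ys. Qed.

Lemma sym_scale t x : sym x -> sym (t *: x).
Proof. by move=> xs s; rewrite linearZ /= xs. Qed.

Lemma sym_tone : sym (tone F c n).
Proof.
move=> s; apply/ffunP => k; rewrite !ffunE; congr ((nat_of_bool _)%:R); apply/eqP/eqP => [e|->].
  by apply/ffunP => m; have := congr1 (fun f : idx c n => f ((s^-1)%g m)) e; rewrite !ffunE permKV.
by apply/ffunP => m; rewrite !ffunE.
Qed.

Lemma sym_symmetrize x : sym (symmetrize x).
Proof.
move=> s; rewrite /symmetrize !tscaleE linearZ linear_sum /=; congr (_ *: _).
under eq_bigr do rewrite tperm_actM.
by rewrite [RHS](reindex_inj (mulIg s)).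
Qed.

Lemma central_tone : central (tone F c n).
Proof.
move=> x _; split=> [|y _]; first by rewrite tone_mull tone_mulr.
by split; rewrite ?tone_mull ?tone_mulr.
Qed.

Lemma central_add z w : central z -> central w -> central (z + w).
Proof.
move=> zc wc x xs; have [zxC zxA] := zc x xs; have [wxC wxA] := wc x xs.
split=> [|y ys]; first by rewrite linearDl linearDr /= zxC wxC.
have [e1 e2 e3] := zxA y ys; have [f1 f2 f3] := wxA y ys.
by split; rewrite !(linearDl, linearDr) /= ?e1 ?e2 ?e3 ?f1 ?f2 ?f3.
Qed.

Lemma central_scale t z : central z -> central (t *: z).
Proof.
move=> zc x xs; have [zxC zxA] := zc x xs.
split=> [|y ys]; first by rewrite linearZl linearZr /= zxC.
have [e1 e2 e3] := zxA y ys.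
by split; rewrite !(linearZl, linearZr) /= ?e1 ?e2 ?e3.
Qed.

Lemma central_sum (I : Type) (r : seq I) (P : pred I) (f : I -> tens) :
  (forall i, P i -> central (f i)) -> central (\sum_(i <- r | P i) f i).
Proof.
move=> fc; apply: big_ind => //; last exact: central_add.
by rewrite -(scale0r (tone F c n)); apply/central_scale/central_tone.
Qed.

Lemma central_tperm_act s z : central z -> central (tperm_act s z).
Proof.
move=> zc x xs; have [zxC zxA] := zc x xs.
split=> [|y ys]; first by rewrite -[in LHS](xs s) -tperm_act_tmul zxC tperm_act_tmul xs.
have [e1 e2 e3] := zxA y ys.
by split; rewrite -(xs s) -(ys s) -!tperm_act_tmul ?e1 ?e2 ?e3.
Qed.

Lemma central_symmetrize z : central z -> central (symmetrize z).
Proof.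
move=> zc; rewrite /symmetrize tscaleE; apply/central_scale/central_sum => s _.
exact: central_tperm_act.
Qed.

Lemma gen_alg_central z a : sym z -> central z -> in_gen_alg z a -> sym a /\ central a.
Proof.
move=> zs zc; elim=> {a} [| | a b _ [aS aC] _ [bS bC] | t a _ [aS aC] | a b _ [aS aC] _ [bS bC]].
- by split; [exact: sym_tone | exact: central_tone].
- by split.
- by split; [exact: sym_add | exact: central_add].
- by rewrite tscaleE; split; [exact: sym_scale | exact: central_scale].
- by split; [exact: sym_tmul | exact: (central_mul sym_tmul)].
Qed.

End SymmetricCenter.

Section Claims.
Variables (F : fieldType) (c : cd_alg).
Hypothesis two_neq0 : 2%:R != 0 :> F.

Lemma central_delta1 n :
  central (@tmul F c (2 + n)) (@is_sym F c (2 + n)) (delta1 F c (2 + n)).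
Proof.
move=> x xs; have xS := is_sym_sym_slices xs.
rewrite delta1_cat; split=> [|y ys].
  by rewrite tmul_delta_cat_sym // tmul_sym_delta_cat // tone_mull tone_mulr.
have yS := is_sym_sym_slices ys; have xyS := is_sym_sym_slices (sym_tmul xs ys).
rewrite !tmul_delta_cat_sym // !tmul_sym_delta_cat // ?tone_mull ?tone_mulr.
by rewrite tmul_delta_cat_sym // ptrace_tmul.
Qed.

Lemma lemma2p8_claims_two_neq0 n : (2 <= n)%N -> lemma2p8_claims F c n.
Proof.
case: n => [|[|n]] // _.
have d1C := @central_delta1 n.
have dnS := @sym_symmetrize F c n.+2 (delta1 F c n.+2).
have dnC := central_symmetrize d1C.
split; first exact: d1C.
split; first by split.
move=> a b e aG bG eG.
have [_ aC] := gen_alg_central dnS dnC aG.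
have [bS _] := gen_alg_central dnS dnC bG.
have [eS _] := gen_alg_central dnS dnC eG.
by split; [rewrite (central_comm aC bS) | rewrite (central_assocl aC bS eS)].
Qed.

End Claims.

Theorem lemma2p8 (R : realType) (c : cd_alg) (n : nat) :
  (2 <= n)%N ->
  lemma2p8_claims (R : fieldType) c n /\ lemma2p8_claims (R[i] : fieldType) c n.
Proof. by move=> n_ge2; split; apply: lemma2p8_claims_two_neq0; rewrite ?Num.Theory.pnatr_eq0. Qed.
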